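(* For any $n\ge 1$, the poset $(\mathsf{Tr}(n),\preccurlyeq)$ is a lattice, and for $u,v\in\mathsf{Tr}(n)$ the join of $u$ and $v$ is the word $\max(u_1,v_1)\max(u_2,v_2)\cdots\max(u_n,v_n)$.
   Context: A triword of size $n$ is a word $u=u_1\cdots u_n$ with $u_i\in\{0,1,2\}$, $u_1\ne 2$, and such that $u_i=0$ implies $u_j\neq 1$ for all $j>i$; $\mathsf{Tr}(n)$ is their set, ordered componentwise: $u\preccurlyeq v$ iff $u_i\le v_i$ for all $i\in[n]$. *)

From mathcomp Require Import all_boot.
Set Implicit Arguments. Unset Strict Implicit. Unset Printing Implicit Defensive.

(* A word of size n over {0,1,2}: letter u_{i+1} is [u i] for i : 'I_n
   (0-based indexing). *)
Definition word (n : nat) := {ffun 'I_n -> 'I_3}.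

Definition triword n (u : word n) : bool :=
  [forall i : 'I_n, (nat_of_ord i == 0) ==> (nat_of_ord (u i) != 2)] &&
  [forall i : 'I_n, forall j : 'I_n,
     ((i < j) && (nat_of_ord (u i) == 0)) ==> (nat_of_ord (u j) != 1)].

Definition wle n (u v : word n) : bool :=
  [forall i : 'I_n, nat_of_ord (u i) <= nat_of_ord (v i)].

Definition wmax n (u v : word n) : word n :=
  [ffun i => if nat_of_ord (u i) <= nat_of_ord (v i) then v i else u i].

Definition is_join_in_Tr n (u v w : word n) : Prop :=
  triword w /\ wle u w /\ wle v w /\
  (forall z : word n, triword z -> wle u z -> wle v z -> wle w z).

Definition is_meet_in_Tr n (u v w : word n) : Prop :=
  triword w /\ wle w u /\ wle w v /\
  (forall z : word n, triword z -> wle z u -> wle z v -> wle z w).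

(* Tr(n) is closed under the componentwise maximum: a position carrying 0 in
   max(u, v) carries 0 in both u and v, so no later letter of u or v is 1, and
   the maximum of two letters from {0, 2} is again not 1.  Hence [wmax] is the
   join.  Tr(n) is finite and has the least element 00...0, so the join of all
   common lower bounds of u and v is their meet. *)

From mathcomp Require Import all_boot.
From mathcomp Require Import zify.

Set Implicit Arguments.
Unset Strict Implicit.
Unset Printing Implicit Defensive.

Lemma wmaxE n (u v : word n) i : nat_of_ord (wmax u v i) = maxn (u i) (v i).
Proof. by rewrite ffunE maxnE; case: leqP => uv; lia. Qed.

Lemma wle_trans n (u v z : word n) : wle u v -> wle v z -> wle u z.
Proof.
move=> /forallP uv /forallP vz; apply/forallP=> i.
exact: leq_trans (uv i) (vz i).
Qed.

Lemma wle_wmaxl n (u v : word n) : wle u (wmax u v).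
Proof. by apply/forallP=> i; rewrite wmaxE leq_maxl. Qed.

Lemma wle_wmaxr n (u v : word n) : wle v (wmax u v).
Proof. by apply/forallP=> i; rewrite wmaxE leq_maxr. Qed.

Lemma wmax_lub n (u v z : word n) : wle u z -> wle v z -> wle (wmax u v) z.
Proof.
move=> /forallP uz /forallP vz; apply/forallP=> i.
by rewrite wmaxE geq_max uz vz.
Qed.

Lemma triword_wmax n (u v : word n) :
  triword u -> triword v -> triword (wmax u v).
Proof.
move=> /andP[/forallP u_first /forallP u_no1].
move=> /andP[/forallP v_first /forallP v_no1].
apply/andP; split.
  apply/forallP=> i; apply/implyP=> i0; rewrite wmaxE.
  move: (implyP (u_first i) i0) (implyP (v_first i) i0).
  move: (ltn_ord (u i)) (ltn_ord (v i)); lia.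
apply/forallP=> i; apply/forallP=> j; apply/implyP=> /andP[ij].
have := ltn_ord (u j); have := ltn_ord (v j).
move: (forallP (u_no1 i) j) (forallP (v_no1 i) j); rewrite ij /= !wmaxE.
move=> /implyP u1 /implyP v1; lia.
Qed.

Definition wzero n : word n := [ffun _ => ord0].

Lemma triword_wzero n : triword (wzero n).
Proof.
apply/andP; split; apply/forallP=> i; last apply/forallP=> j.
all: by rewrite !ffunE implybT.
Qed.

Lemma wle0w n (u : word n) : wle (wzero n) u.
Proof. by apply/forallP=> i; rewrite ffunE. Qed.

Lemma is_join_wmax n (u v : word n) :
  triword u -> triword v -> is_join_in_Tr u v (wmax u v).
Proof.
move=> tu tv; split; first exact: triword_wmax.
split; first exact: wle_wmaxl.
split; first exact: wle_wmaxr.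
by move=> z _; exact: wmax_lub.
Qed.

Lemma wle_big_wmax n (s : seq (word n)) (P : pred (word n)) z :
  z \in s -> P z -> wle z (\big[@wmax n/wzero n]_(w <- s | P w) w).
Proof.
elim: s => // a s IHs; rewrite inE big_cons => /orP[/eqP<- -> | zs Pz].
  exact: wle_wmaxl.
case: ifP => _; last exact: IHs.
exact: wle_trans (IHs zs Pz) (wle_wmaxr _ _).
Qed.

Section Meet.
Variables (n : nat) (u v : word n).

Definition common_lower_bound (z : word n) := [&& triword z, wle z u & wle z v].

Definition wmeet : word n := \big[@wmax n/wzero n]_(z | common_lower_bound z) z.

Lemma triword_wmeet : triword wmeet.
Proof.
rewrite /wmeet; apply: (big_ind (@triword n)); first exact: triword_wzero.
  exact: triword_wmax.
by move=> z /and3P[].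
Qed.

Lemma wmeet_le w : (forall z, common_lower_bound z -> wle z w) -> wle wmeet w.
Proof.
move=> lbw; rewrite /wmeet; apply: (big_ind (fun x => wle x w)) => //.
  exact: wle0w.
by move=> x y; exact: wmax_lub.
Qed.

Lemma is_meet_wmeet : is_meet_in_Tr u v wmeet.
Proof.
split; first exact: triword_wmeet.
split; first by apply: wmeet_le => z /and3P[].
split; first by apply: wmeet_le => z /and3P[].
move=> z tz zu zv; apply: wle_big_wmax; first exact: mem_index_enum.
by rewrite /common_lower_bound tz zu zv.
Qed.

End Meet.

Theorem mainTheorem5 (n : nat) (hn : 1 <= n) :
  (forall u v : word n, triword u -> triword v ->
     (exists w : word n, is_join_in_Tr u v w) /\
     (exists w : word n, is_meet_in_Tr u v w)) /\
  (forall u v : word n, triword u -> triword v -> is_join_in_Tr u v (wmax u v)).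
Proof.
split=> [u v tu tv | u v]; last exact: is_join_wmax.
split; first by exists (wmax u v); exact: is_join_wmax.
by exists (wmeet u v); exact: is_meet_wmeet.
Qed.
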